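(* For every positive integer $n$: (1) the accessible subset-construction determinization of the underlying automaton of $\mathcal{T}_n$ has exactly $3$ states; (2) the accessible subset-construction determinization of the reversed underlying automaton of $\mathcal{T}_n$ has exactly $2^n+n$ states.
   Context: Let $\Sigma_n=\{a_1,\dots,a_n\}$, output monoid the free monoid $\{1\}^*$. $\mathcal{T}_n=\langle\Sigma_n^*\times\{1\}^*,Q,\{s\},\{f\},\Delta_n\rangle$ with $Q=\{s,q_1,\dots,q_n,f\}$ and $\Delta_n=\Delta_{s,n}\cup\Delta_{Q_n}\cup\Delta_{f,n}$ where: $\Delta_{s,n}=\{\langle s,\langle a_j,1^{i-1}\rangle,q_i\rangle:1\le i,j\le n\}$; $\Delta_{Q_n}$ consists, for all $1\le i,j\le n$, of $\langle q_i,\langle a_j,1^n\rangle,q_i\rangle$ if $i\notin\{1,j\}$, $\langle q_1,\langle a_j,1^{n+j-1}\rangle,q_j\rangle$ if $i=1$, and $\langle q_j,\langle a_j,1^{n-j+1}\rangle,q_1\rangle$ if $i=j\neq1$; $\Delta_{f,n}=\{\langle q_i,\langle a_j,1^{2n-i+1}\rangle,f\rangle:1\le j\le i\le n\}$. The underlying automaton of $\mathcal{T}_n$ is the nondeterministic automaton over $\Sigma_n$ with states $Q$, initial state $s$, final state $f$ and a transition $\langle p,a,q\rangle$ for each $\langle p,\langle a,w\rangle,q\rangle\in\Delta_n$; the reversed underlying automaton has initial state $f$, final state $s$ and all transitions reversed. The accessible subset-construction determinization has as states exactly the subsets reachable from the set of initial states via $\delta(P,a)=\{q:\exists p\in P\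 \langle p,a,q\rangle\}$. *)

From mathcomp Require Import all_boot.
Set Implicit Arguments. Unset Strict Implicit. Unset Printing Implicit Defensive.

(* Encoding of T_n:
   - letter a_j of Sigma_n is encoded by the natural number j (1 <= j <= n);
   - an output word 1^k of the free monoid {1}^* is encoded by its length k;
   - state s is encoded by 0, state q_i by i (1 <= i <= n), state f by n+1.
   A transducer transition <p,<a_j,1^k>,q> is the triple ((p,(j,k)),q). *)

Definition st_s : nat := 0.
Definition st_q (i : nat) : nat := i.
Definition st_f (n : nat) : nat := n.+1.

Definition Delta_s (n : nat) : seq (nat * (nat * nat) * nat) :=
  [seq (st_s, (j, i.-1), st_q i) | i <- iota 1 n, j <- iota 1 n].

Definition Delta_Q (n : nat) : seq (nat * (nat * nat) * nat) :=
  flatten [seq [seq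
      (if i == 1 then (st_q 1, (j, n + j - 1), st_q j)
       else if i == j then (st_q j, (j, n - j + 1), st_q 1)
       else (st_q i, (j, n), st_q i))
    | j <- iota 1 n] | i <- iota 1 n].

Definition Delta_f (n : nat) : seq (nat * (nat * nat) * nat) :=
  [seq (st_q i, (j, 2 * n - i + 1), st_f n)
  | i <- iota 1 n, j <- [seq j <- iota 1 n | j <= i]].

Definition Delta (n : nat) := Delta_s n ++ Delta_Q n ++ Delta_f n.

Definition underlying (D : seq (nat * (nat * nat) * nat)) : seq (nat * nat * nat) :=
  [seq (t.1.1, t.1.2.1, t.2) | t <- D].

Definition reverse_trans (A : seq (nat * nat * nat)) : seq (nat * nat * nat) :=
  [seq (t.2, t.1.2, t.1.1) | t <- A].

Definition delta (m : nat) (A : seq (nat * nat * nat)) (P : {set 'I_m}) (a : nat)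
  : {set 'I_m} :=
  [set q : 'I_m | [exists p in P, (nat_of_ord p, a, nat_of_ord q) \in A]].

Definition accessible (m n : nat) (A : seq (nat * nat * nat)) (I : {set 'I_m})
  (P : {set 'I_m}) : Prop :=
  exists w : seq nat, all (fun a => (1 <= a <= n)) w /\ P = foldl (delta A) I w.

Definition num_det_states (m n : nat) (A : seq (nat * nat * nat)) (I : {set 'I_m})
  (k : nat) : Prop :=
  exists S : {set {set 'I_m}},
    (forall P, P \in S <-> accessible n A I P) /\ #|S| = k.

Definition init_s (n : nat) : {set 'I_n.+2} := [set (inord st_s : 'I_n.+2)].
Definition init_f (n : nat) : {set 'I_n.+2} := [set (inord (st_f n) : 'I_n.+2)].

From mathcomp Require Import all_boot fingroup perm zify.

Set Implicit Arguments. Unset Strict Implicit. Unset Printing Implicit Defensive.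

(* Let Q = {q_1, ..., q_n}. Whatever the letter, the forward automaton moves
   {s} to Q and Q to Q ∪ {f}, which is stable. Backwards, a_j moves {f} to the
   suffix {q_j, ..., q_n}, and moves a set P that avoids f and meets Q to
   {s} ∪ (1 j)(P ∩ Q), where (1 j) exchanges q_1 and q_j. So the accessible
   states are {f}, the n suffixes and sets {s} ∪ T with T a nonempty subset
   of Q; all 2^n - 1 of the latter occur, since the (1 j) generate every
   transposition (x y) = (1 x)(1 y)(1 x), and transpositions carry any T to
   any subset of Q of the same size, in particular to a suffix. *)

Section Accessible.
Variables (m n : nat) (A : seq (nat * nat * nat)) (I : {set 'I_m}).

Lemma accessible_init : accessible n A I I.
Proof. by exists [::]. Qed.

Lemma accessible_delta P a :
  accessible n A I P -> 0 < a <= n -> accessible n A I (delta A P a).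
Proof.
case=> w [w_n ->] a_n; exists (rcons w a).
by rewrite all_rcons a_n foldl_rcons.
Qed.

Lemma num_det_states_closed (S : {set {set 'I_m}}) :
  I \in S -> (forall P a, P \in S -> 0 < a <= n -> delta A P a \in S) ->
  {in S, forall P, accessible n A I P} -> num_det_states n A I #|S|.
Proof.
move=> SI S_delta S_acc; exists S; split=> // P; split; first exact: S_acc.
case=> w [+ ->]; elim: w I SI => //= a w IHw J SJ /andP[a_n w_n].
exact: IHw (S_delta _ _ SJ a_n) w_n.
Qed.

End Accessible.

Lemma mem_reverse_trans A p a q : ((p, a, q) \in reverse_trans A) = ((q, a, p) \in A).
Proof.
apply/mapP/idP => [[[[x y] z] _ [-> -> ->]] // | qap].
by exists (q, a, p).
Qed.

Lemma preimset_perm1 (T : finType) (A : {set T}) : (1%g : {perm T}) @^-1: A = A.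
Proof. by apply/setP=> x; rewrite inE perm1. Qed.

Lemma preimset_tperm (T : finType) (A : {set T}) x y :
  x \in A -> y \notin A -> tperm x y @^-1: A = y |: (A :\ x).
Proof.
move=> xA yA; have neq_xy : x != y by apply: contraNneq yA => <-.
apply/setP=> z; rewrite !inE; case: tpermP => [->|->|/eqP zx /eqP zy].
- by rewrite (negPf yA) (negPf neq_xy) eqxx.
- by rewrite eqxx.
- by rewrite (negPf zy) zx.
Qed.

Lemma preimset_tperm_subset (T : finType) (A B : {set T}) x y :
  x \in B -> y \in B -> A \subset B -> tperm x y @^-1: A \subset B.
Proof.
move=> xB yB /subsetP AB; apply/subsetP=> z; rewrite inE.
by case: tpermP => [->|->|_ _ /AB].
Qed.

Section Automaton.
Variable n : nat.
Implicit Types (p q x y : 'I_n.+2) (P T U : {set 'I_n.+2}).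

Definition qsuffix j : {set 'I_n.+2} := [set q : 'I_n.+2 | j <= q <= n].
Local Notation Q := (qsuffix 1).

Definition swap1 a : {perm 'I_n.+2} := tperm (inord 1) (inord a).

Local Notation fwd := (underlying (Delta n)).
Local Notation bwd := (reverse_trans (underlying (Delta n))).

Lemma mem_underlying_Delta_s (p a q : nat) :
  ((p, a, q) \in underlying (Delta_s n)) = [&& 0 < a <= n, p == 0 & 0 < q <= n].
Proof.
apply/mapP/idP => [[_ /allpairsP[[i j] [/= + + ->]] [-> -> ->]] | paq].
  by rewrite !mem_iota /st_s /st_q; lia.
exists (st_s, (a, q.-1), st_q q).
  by apply/allpairsP; exists (q, a); rewrite /= !mem_iota; split=> //; lia.
by rewrite /= /st_s /st_q; congr (_, _, _); lia.
Qed.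

Lemma mem_underlying_Delta_Q (p a q : nat) :
  ((p, a, q) \in underlying (Delta_Q n)) =
  [&& 0 < a <= n, 0 < p <= n & q == if p == 1 then a else if p == a then 1 else p].
Proof.
apply/mapP/idP => [[_ /allpairsP[[i j] [/= + + ->]] [-> -> ->]] | paq].
  by rewrite !mem_iota /st_q; do !case: ifP => /=; lia.
exists (if p == 1 then (st_q 1, (a, n + a - 1), st_q a)
        else if p == a then (st_q a, (a, n - a + 1), st_q 1)
        else (st_q p, (a, n), st_q p)).
  by apply/allpairsP; exists (p, a); rewrite /= !mem_iota; split=> //; lia.
by move: paq; rewrite /st_q; do !case: ifP => /=; move=> *; congr (_, _, _); lia.
Qed.

Lemma mem_underlying_Delta_f (p a q : nat) :
  ((p, a, q) \in underlying (Delta_f n)) = [&& 0 < a <= n, 0 < p <= n, a <= p & q == n.+1].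
Proof.
apply/mapP/idP => [[_ /allpairsPdep[i [j [+ + ->]]] [-> -> ->]] | paq].
  by rewrite mem_filter !mem_iota /st_q /st_f; lia.
exists (st_q p, (a, 2 * n - p + 1), st_f n).
  by apply/allpairsPdep; exists p, a; rewrite /= mem_filter !mem_iota; split=> //; lia.
by rewrite /= /st_q /st_f; congr (_, _, _); lia.
Qed.

Lemma mem_Q q : (q \in Q) = (q != ord0) && (q != ord_max).
Proof. by rewrite inE -!val_eqE /=; have := ltn_ord q; lia. Qed.

Lemma inordK_le k : k <= n -> @inord n.+1 k = k :> nat.
Proof. by move=> le_kn; rewrite inordK //; lia. Qed.

Lemma swap1_val a p : 0 < a <= n ->
  swap1 a p = (if p == 1 :> nat then a else if p == a :> nat then 1 else p) :> nat.
Proof.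
move=> a_n; have [le1n lean] : 1 <= n /\ a <= n by lia.
rewrite /swap1; case: tpermP => [->|->|/eqP p1 /eqP pa]; rewrite ?inordK_le //.
  by rewrite eqxx; case: eqP.
by move: p1 pa; rewrite -!val_eqE /= !inordK_le // => /negPf-> /negPf->.
Qed.

Lemma swap1_Q a q : 0 < a <= n -> (swap1 a q \in Q) = (q \in Q).
Proof. by move=> a_n; rewrite !inE swap1_val //; do !case: ifP; lia. Qed.

Lemma mem_fwd p a q : 0 < a <= n ->
  ((val p, a, val q) \in fwd) =
  [|| (p == ord0) && (q \in Q), (p \in Q) && (q == swap1 a p)
    | [&& p \in Q, a <= p & q == ord_max]].
Proof.
move=> a_n; rewrite /Delta /underlying !map_cat !mem_cat -!/(underlying _).
rewrite mem_underlying_Delta_s mem_underlying_Delta_Q mem_underlying_Delta_f a_n /=.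
by rewrite !inE -!val_eqE /= swap1_val.
Qed.

Lemma init_sE : init_s n = [set ord0].
Proof. by congr [set _]; apply: val_inj; rewrite /= inordK. Qed.

Lemma init_fE : init_f n = [set ord_max].
Proof. by congr [set _]; apply: val_inj; rewrite /= inordK. Qed.

Lemma ord0_Q : (ord0 \in Q) = false.
Proof. by rewrite inE. Qed.

Lemma ord_max_Q : (ord_max \in Q) = false.
Proof. by rewrite inE /= ltnn. Qed.

Lemma delta_fwd_init a : 0 < a <= n -> delta fwd [set ord0] a = Q.
Proof.
move=> a_n; apply/setP=> q; rewrite inE.
apply/existsP/idP => [[_ /andP[/set1P-> ]] | qQ].
  by rewrite mem_fwd // eqxx ord0_Q /= !orbF.
by exists ord0; rewrite inE eqxx mem_fwd // eqxx qQ.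
Qed.

Lemma delta_fwd_Q P a : 0 < a <= n -> Q \subset P -> P \subset [set~ ord0] ->
  delta fwd P a = [set~ ord0].
Proof.
move=> a_n /subsetP QP /subsetP P0; apply/setP=> q; rewrite !inE.
apply/existsP/idP => [[p /andP[/P0 + ]] | q0].
  rewrite in_setC1 mem_fwd // => /negPf-> /=.
  case/orP => [/andP[pQ /eqP->] | /and3P[_ _ /eqP->]]; last by rewrite -val_eqE.
  by move: pQ; rewrite -(swap1_Q _ a_n) mem_Q => /andP[].
have [-> | qmax] := eqVneq q ord_max.
  have nQ : inord n \in Q by rewrite inE inordK_le //; lia.
  exists (inord n); rewrite QP // mem_fwd // nQ inordK_le // eqxx.
  by rewrite (_ : a <= n) ?orbT; lia.
have qQ : q \in Q by rewrite mem_Q q0.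
exists (swap1 a q); rewrite QP ?swap1_Q // mem_fwd // swap1_Q // qQ tpermK eqxx.
by rewrite orbT.
Qed.

Lemma delta_bwd_init a : 0 < a <= n -> delta bwd [set ord_max] a = qsuffix a.
Proof.
move=> a_n; apply/setP=> q; rewrite inE.
apply/existsP/idP => [[_ /andP[/set1P-> ]] | qa].
  rewrite mem_reverse_trans mem_fwd // ord_max_Q eqxx andbT andbF /=.
  case/orP => [/andP[qQ /eqP maxE] | /andP[qQ aq]].
    by move: qQ; rewrite -(swap1_Q _ a_n) -maxE ord_max_Q.
  by move: qQ; rewrite !inE aq; lia.
exists ord_max; rewrite inE eqxx mem_reverse_trans mem_fwd // eqxx andbT /=.
by move: qa; rewrite !inE => /andP[aq ->]; rewrite aq; lia.
Qed.

Lemma delta_bwd P a : 0 < a <= n -> ord_max \notin P -> P :&: Q != set0 ->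
  delta bwd P a = ord0 |: swap1 a @^-1: (P :&: Q).
Proof.
move=> a_n Pmax /set0Pn[p0]; rewrite inE => /andP[Pp0 p0Q].
apply/setP=> q; rewrite inE in_setU1 [_ \in _ @^-1: _]inE in_setI.
apply/existsP/idP => [[p /andP[Pp]] | ].
  rewrite mem_reverse_trans mem_fwd //.
  case/or3P => [/andP[-> _] // | /andP[qQ /eqP pE] | /and3P[_ _ /eqP pmax]].
    by rewrite -pE Pp pE swap1_Q // qQ orbT.
  by move: Pmax; rewrite -pmax Pp.
case/orP => [/eqP-> | /andP[sP sQ]].
  by exists p0; rewrite Pp0 mem_reverse_trans mem_fwd // eqxx p0Q.
have qQ : q \in Q by rewrite -(swap1_Q _ a_n).
by exists (swap1 a q); rewrite sP mem_reverse_trans mem_fwd // qQ eqxx /= orbT.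
Qed.

Lemma card_qsuffix j : #|qsuffix j| = n.+1 - j.
Proof.
have [k] := ubnP (n.+1 - j); elim: k j => // k IHk j ltjk.
have [le_jn | lt_nj] := leqP j n; last first.
  have -> : qsuffix j = set0 by apply/setP=> q; rewrite !inE; apply/negbTE; lia.
  by rewrite cards0; lia.
have -> : qsuffix j = inord j |: qsuffix j.+1.
  by apply/setP=> q; rewrite !inE -val_eqE /= inordK_le //; lia.
by rewrite cardsU1 IHk ?inE ?inordK_le //= ?ltnn; lia.
Qed.

Lemma card_Q : #|Q| = n.
Proof. by rewrite card_qsuffix subn1. Qed.

Lemma qsuffix_inj : {in Q &, injective (fun j : 'I_n.+2 => qsuffix j)}.
Proof.
move=> i j; rewrite !inE => /andP[_ i_n] /andP[_ j_n] /setP E.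
have ij : i <= j by move: (E j); rewrite !inE leqnn j_n !andbT.
have ji : j <= i by move: (E i); rewrite !inE leqnn i_n !andbT.
by apply: val_inj => /=; lia.
Qed.

Local Notation subQ := (powerset Q :\ set0).

Lemma mem_subQ T : (T \in subQ) = (T != set0) && (T \subset Q).
Proof. by rewrite in_setD1 powersetE. Qed.

Lemma subQ_ord0 T : T \subset Q -> ord0 \notin T.
Proof. by move=> TQ; apply: contraFN (subsetP TQ _) ord0_Q. Qed.

Lemma subQ_ord_max T : T \subset Q -> ord_max \notin T.
Proof. by move=> TQ; apply: contraFN (subsetP TQ _) ord_max_Q. Qed.

Lemma qsuffix_subQ j : 0 < j <= n -> qsuffix j \in subQ.
Proof.
move=> j_n; rewrite mem_subQ; apply/andP; split.
  by apply/set0Pn; exists (inord j); rewrite inE inordK_le //; lia.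
by apply/subsetP=> q; rewrite !inE; lia.
Qed.

Lemma preimset_swap1_subQ T a : 0 < a <= n -> T \in subQ -> swap1 a @^-1: T \in subQ.
Proof.
move=> a_n; rewrite !mem_subQ -!card_gt0 card_preimset; last exact: perm_inj.
case/andP=> -> /subsetP TQ /=; apply/subsetP=> q; rewrite inE => /TQ.
by rewrite swap1_Q.
Qed.

Lemma delta_bwd_subQ T a : 0 < a <= n -> T \in subQ ->
  delta bwd T a = ord0 |: swap1 a @^-1: T.
Proof.
move=> a_n; rewrite mem_subQ => /andP[T0 TQ].
by rewrite delta_bwd ?(setIidPl TQ) ?subQ_ord_max.
Qed.

Lemma delta_bwd_s0 T a : 0 < a <= n -> T \in subQ ->
  delta bwd (ord0 |: T) a = ord0 |: swap1 a @^-1: T.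
Proof.
move=> a_n; rewrite mem_subQ => /andP[T0 TQ].
have s0TQ : (ord0 |: T) :&: Q = T.
  by rewrite setIUl (setIidPl TQ) disjoint_setI0 ?set0U // disjoints1 ord0_Q.
by rewrite delta_bwd ?s0TQ // in_setU1 negb_or -val_eqE /= subQ_ord_max.
Qed.

Local Notation acc := (accessible n bwd (init_f n)).

Lemma accessible_qsuffix j : 0 < j <= n -> acc (qsuffix j) /\ acc (ord0 |: qsuffix j).
Proof.
move=> j_n; have acc_j : acc (qsuffix j).
  rewrite -(delta_bwd_init j_n) -init_fE.
  exact: accessible_delta (accessible_init _ _ _) j_n.
split=> //; have one_n : 0 < 1 <= n by lia.
have -> : ord0 |: qsuffix j = delta bwd (qsuffix j) 1.
  by rewrite delta_bwd_subQ ?qsuffix_subQ // /swap1 tperm1 preimset_perm1.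
exact: accessible_delta.
Qed.

Lemma accessible_swap1 T a : 0 < a <= n -> T \in subQ ->
  acc (ord0 |: T) -> acc (ord0 |: swap1 a @^-1: T).
Proof. by move=> a_n TQ accT; rewrite -delta_bwd_s0 //; apply: accessible_delta. Qed.

Lemma accessible_tperm T x y : x \in Q -> y \in Q -> T \in subQ ->
  acc (ord0 |: T) -> acc (ord0 |: tperm x y @^-1: T).
Proof.
have [-> | neq_xy] := eqVneq x y; first by rewrite tperm1 preimset_perm1.
wlog y1 : x y neq_xy / y != inord 1.
  move=> wlog_y xQ yQ; have [y1|y1] := eqVneq y (inord 1).
    by rewrite tpermC; apply: (wlog_y y x) => //; [rewrite eq_sym | rewrite -y1].
  exact: wlog_y neq_xy y1 xQ yQ.
move=> xQ yQ TQ accT.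
have [x_n y_n] : 0 < x <= n /\ 0 < y <= n by move: xQ yQ; rewrite !inE.
have -> : tperm x y @^-1: T = swap1 x @^-1: (swap1 y @^-1: (swap1 x @^-1: T)).
  apply/setP=> q; rewrite !inE /swap1 !inord_val.
  have y1' : inord 1 != y by rewrite eq_sym.
  by rewrite -(tpermJ_tperm y1' neq_xy) conjgE tpermV !permM.
apply: (accessible_swap1 x_n (preimset_swap1_subQ y_n (preimset_swap1_subQ x_n TQ))).
apply: (accessible_swap1 y_n (preimset_swap1_subQ x_n TQ)).
exact: accessible_swap1 x_n TQ accT.
Qed.

Lemma accessible_card T U : T \in subQ -> U \subset Q -> #|T| = #|U| ->
  acc (ord0 |: U) -> acc (ord0 |: T).
Proof.
move=> TsQ; have := TsQ; rewrite mem_subQ => /andP[T0 TQ].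
have [k] := ubnP #|U :\: T|; elim: k U => // k IHk U ltUk UQ TU accU.
have [/eqP | [y yUT]] := set_0Vmem (U :\: T).
  rewrite setD_eq0 => UT.
  by have /eqP-> : T == U by rewrite eq_sym eqEcard UT TU leqnn.
have /set0Pn[x xTU] : T :\: U != set0.
  rewrite setD_eq0; apply: contraTN yUT => TU'.
  have /eqP-> : T == U by rewrite eqEcard TU' TU leqnn.
  by rewrite setDv inE.
move: xTU yUT; rewrite !in_setD => /andP[xU xT] /andP[yT yU].
have [xQ yQ] : x \in Q /\ y \in Q by split; [apply: (subsetP TQ) | apply: (subsetP UQ)].
have UsQ : U \in subQ by rewrite mem_subQ UQ -card_gt0 -TU card_gt0 T0.
apply: (IHk (tperm y x @^-1: U)); last exact: accessible_tperm.
- rewrite (preimset_tperm yU xU); apply: leq_trans (ltnSE ltUk).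
  rewrite (_ : _ :\: T = (U :\: T) :\ y); first exact/proper_card/properD1/setDP.
  apply/setP=> q; rewrite !inE; have [->|_] := eqVneq q x; first by rewrite xT andbF.
  by rewrite andbCA.
- exact: preimset_tperm_subset.
- by rewrite card_preimset //; exact: perm_inj.
Qed.

Lemma accessible_subQ T : T \in subQ -> acc (ord0 |: T).
Proof.
move=> TsQ; have := TsQ; rewrite mem_subQ -card_gt0 => /andP[T0 TQ].
have le_Tn : #|T| <= n by move/subset_leq_card: TQ; rewrite card_Q.
have j_n : 0 < n.+1 - #|T| <= n by lia.
apply: (accessible_card TsQ (U := qsuffix (n.+1 - #|T|))).
- by apply/subsetP=> q; rewrite !inE; lia.
- by rewrite card_qsuffix; lia.
- by case: (accessible_qsuffix j_n).
Qed.

Definition fwd_states : {set {set 'I_n.+2}} := [set ord0] |: [set Q; [set~ ord0]].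

Lemma card_fwd_states : #|fwd_states| = 3.
Proof.
have ne_sQ : [set ord0] != Q by apply/eqP=> /setP/(_ ord0); rewrite set11 ord0_Q.
have ne_sQF : [set ord0] != [set~ ord0 : 'I_n.+2].
  by apply/eqP=> /setP/(_ ord0); rewrite set11 in_setC1 eqxx.
have ne_QQF : Q != [set~ ord0].
  by apply/eqP=> /setP/(_ ord_max); rewrite ord_max_Q in_setC1 -val_eqE.
by rewrite cardsU1 cards2 !inE ne_QQF (negPf ne_sQ) (negPf ne_sQF).
Qed.

Lemma num_det_states_fwd : 0 < n -> num_det_states n fwd (init_s n) 3.
Proof.
move=> n_gt0; have one_n : 0 < 1 <= n by lia.
have QQF : Q \subset [set~ ord0].
  by apply/subsetP=> q; rewrite mem_Q in_setC1 => /andP[].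
rewrite -card_fwd_states init_sE; apply: num_det_states_closed => [|P a|P].
- by rewrite !inE eqxx.
- rewrite !inE => /or3P[] /eqP-> a_n.
  + by rewrite delta_fwd_init // eqxx orbT.
  + by rewrite delta_fwd_Q // eqxx !orbT.
  + by rewrite delta_fwd_Q // eqxx !orbT.
- have acc_Q : accessible n fwd [set ord0] Q.
    rewrite -(delta_fwd_init one_n).
    exact: accessible_delta (accessible_init _ _ _) one_n.
  rewrite !inE => /or3P[] /eqP->; [exact: accessible_init | exact: acc_Q |].
  by rewrite -(delta_fwd_Q one_n (subxx Q) QQF); exact: accessible_delta acc_Q one_n.
Qed.

Definition suffix_states : {set {set 'I_n.+2}} := [set qsuffix j | j : 'I_n.+2 in Q].
Definition s0_states : {set {set 'I_n.+2}} := [set ord0 |: T | T in subQ].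
Definition bwd_states := init_f n |: (suffix_states :|: s0_states).

Lemma card_suffix_states : #|suffix_states| = n.
Proof. by rewrite card_in_imset ?card_Q //; exact: qsuffix_inj. Qed.

Lemma card_s0_states : #|s0_states| = 2 ^ n - 1.
Proof.
rewrite card_in_imset; last first.
  move=> T U; rewrite !mem_subQ => /andP[_ TQ] /andP[_ UQ] /(congr1 (fun P => P :\ ord0)).
  by rewrite !setU1K ?subQ_ord0.
have := cardsD1 set0 (powerset Q).
by rewrite card_powerset card_Q powersetE sub0set => ->; rewrite add1n subn1.
Qed.

Lemma card_bwd_states : #|bwd_states| = 2 ^ n + n.
Proof.
have disj : suffix_states :&: s0_states = set0.
  apply/setP=> P; rewrite in_setI in_set0; apply/negbTE/andP.
  case=> /imsetP[j jQ ->] /imsetP[T _ /setP/(_ ord0)]; rewrite setU11 inE /=.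
  by move: jQ; rewrite inE; lia.
rewrite /bwd_states init_fE cardsU1 cardsU disj cards0 card_suffix_states card_s0_states.
rewrite in_setU negb_or (_ : [set ord_max] \in suffix_states = false); last first.
  by apply/imsetP=> -[j _ /setP/(_ ord_max)]; rewrite set11 inE /= ltnn andbF.
rewrite (_ : [set ord_max] \in s0_states = false); last first.
  by apply/imsetP=> -[T _ /setP/(_ ord0)]; rewrite in_set1 setU11 -val_eqE.
by have := expn_gt0 2 n; lia.
Qed.

Lemma qsuffix_bwd_states j : 0 < j <= n -> qsuffix j \in bwd_states.
Proof.
move=> j_n; apply/setU1P; right; apply/setUP; left.
by apply/imsetP; exists (inord j); rewrite ?inE inordK_le //; lia.
Qed.

Lemma s0_bwd_states T : T \in subQ -> ord0 |: T \in bwd_states.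
Proof. by move=> TsQ; rewrite !in_setU1 in_setU imset_f ?orbT. Qed.

Lemma delta_bwd_states P a :
  P \in bwd_states -> 0 < a <= n -> delta bwd P a \in bwd_states.
Proof.
case/setU1P=> [-> | /setUP[] /imsetP[X XQ ->]] a_n.
- by rewrite init_fE delta_bwd_init // qsuffix_bwd_states.
- have X_n : 0 < X <= n by move: XQ; rewrite inE.
  rewrite delta_bwd_subQ ?qsuffix_subQ // s0_bwd_states //.
  by rewrite preimset_swap1_subQ ?qsuffix_subQ.
- by rewrite delta_bwd_s0 // s0_bwd_states ?preimset_swap1_subQ.
Qed.

Lemma accessible_bwd_states : {in bwd_states, forall P, acc P}.
Proof.
move=> P /setU1P[-> | /setUP[] /imsetP[X XQ ->]].
- exact: accessible_init.
- by move: XQ; rewrite inE => /accessible_qsuffix[].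
- exact: accessible_subQ.
Qed.

Lemma num_det_states_bwd : num_det_states n bwd (init_f n) (2 ^ n + n).
Proof.
rewrite -card_bwd_states; apply: num_det_states_closed accessible_bwd_states.
  by rewrite setU11.
exact: delta_bwd_states.
Qed.

End Automaton.

Theorem lemma11 (n : nat) (hn : 0 < n) :
  num_det_states n (underlying (Delta n)) (init_s n) 3 /\
  num_det_states n (reverse_trans (underlying (Delta n))) (init_f n) (2 ^ n + n).
Proof. by split; [exact: num_det_states_fwd | exact: num_det_states_bwd]. Qed.
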